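(* Let $\mathbf{x}:[-1,1]^2\to\mathbb{R}^2$, $\mathbf{x}(\xi,\eta)=(x(\xi,\eta),y(\xi,\eta))$, be a $C^1$ map whose Jacobian matrix $\mathbf{J}(\xi,\eta)=\begin{bmatrix} x_\xi & x_\eta\\ y_\xi & y_\eta\end{bmatrix}$ is nonsingular on the edge $\{\xi=1\}$ (including the corners $(1,\pm1)$). Let $F(-1,\cdot)$, $F(\cdot,-1)$, $F(\cdot,1)$ be given differentiable functions on $[-1,1]$ (the transformed Dirichlet data on the edges $\xi=-1$, $\eta=-1$, $\eta=1$), with $F(-1,-1)$ and $F(-1,1)$ taking the same value whether read from $F(-1,\cdot)$ or from $F(\cdot,\mp1)$, and let $u_{nBC}$ be a given function on the image of the edge $\xi=1$ (Neumann data). Define $S_{BC},T_{BC},\lambda_B,\lambda_C,F^a_\eta(1,\pm1)$, the polynomials $\varphi_0,\varphi_1,\psi_0,\psi_1$, and the operators $Pg$, $F^g_\xi(1,\eta)$, $PF^g$ as in the context. Assume the compatibility conditions: if $\lambda_B=0$ then $F_\xi(1,-1)=T_{BC}(-1)$, and if $\lambda_C=0$ then $F_\xi(1,1)=T_{BC}(1)$. Then for every sufficiently differentiable $g:[-1,1]^2\to\mathbb{R}$, the function $$V(\xi,\eta)=g(\xi,\eta)-Pg(\xi,\eta)+PF^g(\xi,\eta)$$ satisfies, for all $\xi,\eta\in[-1,1]$, $V(-1,\eta)=F(-1,\eta)$, $V(\xi,-1)=F(\xi,-1)$, $V(\xi,1)=F(\xi,1)$, and $$V_\xi(1,\eta)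+S_{BC}(\eta)V_\eta(1,\eta)=T_{BC}(\eta).$$
   Context: Setting: a curved quadrilateral $ABCD$ is the image of $[-1,1]^2$ under $\mathbf{x}$, with $A=\mathbf{x}(-1,-1)$, $B=\mathbf{x}(1,-1)$, $C=\mathbf{x}(1,1)$, $D=\mathbf{x}(-1,1)$; edge $AB$ is $\eta=-1$, $BC$ is $\xi=1$, $CD$ is $\eta=1$, $AD$ is $\xi=-1$. A field $u$ on the quadrilateral is represented as $V(\xi,\eta)=u(\mathbf{x}(\xi,\eta))$; Dirichlet data on $AB,CD,AD$ become $F(\xi,-1),F(\xi,1),F(-1,\eta)$, and the Neumann condition $\mathbf n\cdot\nabla u=u_{nBC}$ on $BC$ becomes $V_\xi(1,\eta)+S_{BC}(\eta)V_\eta(1,\eta)=T_{BC}(\eta)$. Notation: $F(1,-1):=F(\xi,-1)|_{\xi=1}$, $F(1,1):=F(\xi,1)|_{\xi=1}$, $F_\xi(1,-1):=\frac{d}{d\xi}F(\xi,-1)|_{\xi=1}$, $F_\xi(1,1):=\frac{d}{d\xi}F(\xi,1)|_{\xi=1}$. Definitions: $K_{xBC}(\eta)=\frac{\|\mathbf{x}_\eta(1,\eta)\|}{\det\mathbf{J}(1,\eta)}$, $K_{yBC}(\eta)=-\frac{\mathbf{x}_\xi(1,\eta)\cdot\mathbf{x}_\eta(1,\eta)}{\|\mathbf{x}_\eta(1,\eta)\|\det\mathbf{J}(1,\eta)}$, $S_{BC}(\eta)=K_{yBC}(\eta)/K_{xBC}(\eta)$, $T_{BC}(\eta)=u_{nBC}(\mathbf{x}(1,\eta))/K_{xBC}(\eta)$.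 Flags: $\lambda_B=0$ if $\mathbf{x}_\xi(1,-1)\cdot\mathbf{x}_\eta(1,-1)=0$ (edges $AB$ and $BC$ orthogonal at $B$) and $\lambda_B=1$ otherwise; $\lambda_C=0$ if $\mathbf{x}_\xi(1,1)\cdot\mathbf{x}_\eta(1,1)=0$ and $\lambda_C=1$ otherwise. When $\lambda_B=1$, $F^a_\eta(1,-1)=\frac{T_{BC}(-1)-F_\xi(1,-1)}{S_{BC}(-1)}$; when $\lambda_C=1$, $F^a_\eta(1,1)=\frac{T_{BC}(1)-F_\xi(1,1)}{S_{BC}(1)}$; any term multiplied by a flag equal to $0$ is taken to be $0$. Polynomials on $[-1,1]$: $\phi_0(t)=\tfrac12(1-t)$, $\phi_1(t)=\tfrac12(1+t)$; $\varphi_0=\phi_0^2(1+2\phi_1)$, $\varphi_1=\phi_1^2(1+2\phi_0)$, $\psi_0=2\phi_0^2\phi_1$, $\psi_1=-2\phi_0\phi_1^2$. $Pg(\xi,\eta)=g(-1,\eta)\varphi_0(\xi)+g_\xi(1,\eta)\psi_1(\xi)+g(\xi,-1)\varphi_0(\eta)+g(\xi,1)\varphi_1(\eta)-[g(-1,-1)\varphi_0(\eta)+g(-1,1)\varphi_1(\eta)]\varphi_0(\xi)-[g_\xi(1,-1)\varphi_0(\eta)+g_\xi(1,1)\varphi_1(\eta)]\psi_1(\xi)+[\lambda_Bg_\eta(1,-1)\psi_0(\eta)+\lambda_Cg_\eta(1,1)\psi_1(\eta)]\varphi_1(\xi)$. $F^g_\xi(1,\eta)=T_{BC}(\eta)-S_{BC}(\eta)\{g_\eta(1,\eta)-[g(1,-1)-F(1,-1)]\varphi_0'(\eta)-[g(1,1)-F(1,1)]\varphi_1'(\eta)-\lambda_B[g_\eta(1,-1)-F^a_\eta(1,-1)]\psi_0'(\eta)-\lambda_C[g_\eta(1,1)-F^a_\eta(1,1)]\psi_1'(\eta)\}$.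 $PF^g(\xi,\eta)=F(-1,\eta)\varphi_0(\xi)+F^g_\xi(1,\eta)\psi_1(\xi)+F(\xi,-1)\varphi_0(\eta)+F(\xi,1)\varphi_1(\eta)-[F(-1,-1)\varphi_0(\eta)+F(-1,1)\varphi_1(\eta)]\varphi_0(\xi)-[F_\xi(1,-1)\varphi_0(\eta)+F_\xi(1,1)\varphi_1(\eta)]\psi_1(\xi)+[\lambda_BF^a_\eta(1,-1)\psi_0(\eta)+\lambda_CF^a_\eta(1,1)\psi_1(\eta)]\varphi_1(\xi)$. *)

From Stdlib Require Import Reals Lra.
From Coquelicot Require Import Coquelicot.
Open Scope R_scope.

Definition I11 (t : R) : Prop := -1 <= t <= 1.
Definition Sq (p : R * R) : Prop := I11 (fst p) /\ I11 (snd p).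

Definition dxi (f : R -> R -> R) (a b : R) : R := Derive (fun s => f s b) a.
Definition deta (f : R -> R -> R) (a b : R) : R := Derive (fun t => f a t) b.

Definition C1_on_square (f : R -> R -> R) : Prop :=
  forall a b, I11 a -> I11 b ->
    ex_derive (fun s => f s b) a /\ ex_derive (fun t => f a t) b /\
    filterlim (fun p : R * R => dxi f (fst p) (snd p)) (within Sq (locally (a, b)))
              (locally (dxi f a b)) /\
    filterlim (fun p : R * R => deta f (fst p) (snd p)) (within Sq (locally (a, b)))
              (locally (deta f a b)).

Definition phi0 (t : R) : R := (1 - t) / 2.
Definition phi1 (t : R) : R := (1 + t) / 2.
Definition vphi0 (t : R) : R := phi0 t ^ 2 * (1 + 2 * phi1 t).
Definition vphi1 (t : R) : R := phi1 t ^ 2 * (1 + 2 * phi0 t).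
Definition psi0 (t : R) : R := 2 * phi0 t ^ 2 * phi1 t.
Definition psi1 (t : R) : R := - 2 * phi0 t * phi1 t ^ 2.

Section Geometry.
Variables xx yy : R -> R -> R.

Definition detJ (a b : R) : R := dxi xx a b * deta yy a b - deta xx a b * dxi yy a b.
Definition norm_xeta (a b : R) : R := sqrt (deta xx a b ^ 2 + deta yy a b ^ 2).
Definition dot_xxi_xeta (a b : R) : R := dxi xx a b * deta xx a b + dxi yy a b * deta yy a b.

Definition KxBC (eta : R) : R := norm_xeta 1 eta / detJ 1 eta.
Definition KyBC (eta : R) : R := - dot_xxi_xeta 1 eta / (norm_xeta 1 eta * detJ 1 eta).
Definition SBC (eta : R) : R := KyBC eta / KxBC eta.
Definition TBC (unBC : R * R -> R) (eta : R) : R := unBC (xx 1 eta, yy 1 eta) / KxBC eta.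

(* flags: 0 iff the edges meet orthogonally at the corner *)
Definition lamB : R := if Req_dec_T (dot_xxi_xeta 1 (-1)) 0 then 0 else 1.
Definition lamC : R := if Req_dec_T (dot_xxi_xeta 1 1) 0 then 0 else 1.
End Geometry.

Section Transfinite.
Variables (xx yy : R -> R -> R) (unBC : R * R -> R).
(* Dirichlet data: FL = F(-1,.), FB = F(.,-1), FT = F(.,1) *)
Variables (FL FB FT : R -> R).

Let S := SBC xx yy.
Let T := TBC xx yy unBC.
Let lB := lamB xx yy.
Let lC := lamC xx yy.

Definition FaB : R := (T (-1) - Derive FB 1) / S (-1).
Definition FaC : R := (T 1 - Derive FT 1) / S 1.

Definition Pg (g : R -> R -> R) (xi eta : R) : R :=
  g (-1) eta * vphi0 xi + dxi g 1 eta * psi1 xi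
  + g xi (-1) * vphi0 eta + g xi 1 * vphi1 eta
  - (g (-1) (-1) * vphi0 eta + g (-1) 1 * vphi1 eta) * vphi0 xi
  - (dxi g 1 (-1) * vphi0 eta + dxi g 1 1 * vphi1 eta) * psi1 xi
  + (lB * deta g 1 (-1) * psi0 eta + lC * deta g 1 1 * psi1 eta) * vphi1 xi.

Definition Fgxi (g : R -> R -> R) (eta : R) : R :=
  T eta - S eta *
    (deta g 1 eta
     - (g 1 (-1) - FB 1) * Derive vphi0 eta
     - (g 1 1 - FT 1) * Derive vphi1 eta
     - lB * (deta g 1 (-1) - FaB) * Derive psi0 eta
     - lC * (deta g 1 1 - FaC) * Derive psi1 eta).

Definition PFg (g : R -> R -> R) (xi eta : R) : R :=
  FL eta * vphi0 xi + Fgxi g eta * psi1 xi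
  + FB xi * vphi0 eta + FT xi * vphi1 eta
  - (FL (-1) * vphi0 eta + FL 1 * vphi1 eta) * vphi0 xi
  - (Derive FB 1 * vphi0 eta + Derive FT 1 * vphi1 eta) * psi1 xi
  + (lB * FaB * psi0 eta + lC * FaC * psi1 eta) * vphi1 xi.

Definition Vsol (g : R -> R -> R) (xi eta : R) : R := g xi eta - Pg g xi eta + PFg g xi eta.
End Transfinite.

(* Pg and PFg are instances of one Coons-type blending operator: on the edges
   xi = -1, eta = -1, eta = 1 it reproduces its edge data once the corner data
   are consistent, on xi = 1 it is the cubic Hermite interpolant of its corner
   data, and its xi-derivative there is its Neumann datum.  So V(1, .) is
   g(1, .) minus a Hermite cubic, and F^g_xi(1, .) = T_BC - S_BC V_eta(1, .) by
   construction.  The only real work is the corner consistency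
   F^g_xi(1, -1) = F_xi(1, -1) (and likewise at C): either lambda_B = 0, where
   S_BC(-1) = 0 and the compatibility condition applies, or lambda_B = 1, where
   S_BC(-1) <> 0 and F^a_eta(1, -1) was chosen to make it hold. *)
From Stdlib Require Import Reals Lra.
From Coquelicot Require Import Coquelicot.
Open Scope R_scope.

Definition hermite (a b p q t : R) : R :=
  a * vphi0 t + b * vphi1 t + p * psi0 t + q * psi1 t.

Definition hermite_d (a b p q t : R) : R :=
  a * Derive vphi0 t + b * Derive vphi1 t + p * Derive psi0 t + q * Derive psi1 t.

Lemma is_derive_vphi0 t : is_derive vphi0 t (3 * (t ^ 2 - 1) / 4).
Proof. unfold vphi0, phi0, phi1; auto_derive; [easy | field]. Qed.

Lemma is_derive_vphi1 t : is_derive vphi1 t (3 * (1 - t ^ 2) / 4).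
Proof. unfold vphi1, phi0, phi1; auto_derive; [easy | field]. Qed.

Lemma is_derive_psi0 t : is_derive psi0 t ((3 * t ^ 2 - 2 * t - 1) / 4).
Proof. unfold psi0, phi0, phi1; auto_derive; [easy | field]. Qed.

Lemma is_derive_psi1 t : is_derive psi1 t ((3 * t ^ 2 + 2 * t - 1) / 4).
Proof. unfold psi1, phi0, phi1; auto_derive; [easy | field]. Qed.

Lemma hermite_d_eq a b p q t :
  hermite_d a b p q t
  = (3 * (a - b) * (t ^ 2 - 1) + p * (3 * t ^ 2 - 2 * t - 1)
     + q * (3 * t ^ 2 + 2 * t - 1)) / 4.
Proof.
  unfold hermite_d.
  rewrite (is_derive_unique _ _ _ (is_derive_vphi0 t)),
    (is_derive_unique _ _ _ (is_derive_vphi1 t)),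
    (is_derive_unique _ _ _ (is_derive_psi0 t)),
    (is_derive_unique _ _ _ (is_derive_psi1 t)).
  field.
Qed.

Lemma is_derive_hermite a b p q t :
  is_derive (hermite a b p q) t (hermite_d a b p q t).
Proof.
  rewrite hermite_d_eq; unfold hermite, vphi0, vphi1, psi0, psi1, phi0, phi1.
  auto_derive; [easy | field].
Qed.

Lemma hermite_d_m1 a b p q : hermite_d a b p q (-1) = p.
Proof. rewrite hermite_d_eq; field. Qed.

Lemma hermite_d_1 a b p q : hermite_d a b p q 1 = q.
Proof. rewrite hermite_d_eq; field. Qed.

Section Blend.

Variables (L N B T : R -> R) (cA cD dB dC eB eC : R).

(* [L], [B], [T]: Dirichlet data on xi = -1, eta = -1, eta = 1; [N]: the
   xi-derivative on xi = 1; [cA], [cD]: values at A, D; [dB], [dC]: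
   xi-derivatives at B, C; [eB], [eC]: eta-derivatives at B, C. *)
Definition blend (xi eta : R) : R :=
  L eta * vphi0 xi + N eta * psi1 xi + B xi * vphi0 eta + T xi * vphi1 eta
  - (cA * vphi0 eta + cD * vphi1 eta) * vphi0 xi
  - (dB * vphi0 eta + dC * vphi1 eta) * psi1 xi
  + (eB * psi0 eta + eC * psi1 eta) * vphi1 xi.

Lemma blend_left eta : cA = B (-1) -> cD = T (-1) -> blend (-1) eta = L eta.
Proof.
  intros HA HD; unfold blend; rewrite HA, HD.
  unfold vphi0, vphi1, psi0, psi1, phi0, phi1; field.
Qed.

Lemma blend_bottom xi : L (-1) = cA -> N (-1) = dB -> blend xi (-1) = B xi.
Proof.
  intros HA HB; unfold blend; rewrite <- HA, <- HB.
  unfold vphi0, vphi1, psi0, psi1, phi0, phi1; field.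
Qed.

Lemma blend_top xi : L 1 = cD -> N 1 = dC -> blend xi 1 = T xi.
Proof.
  intros HD HC; unfold blend; rewrite <- HD, <- HC.
  unfold vphi0, vphi1, psi0, psi1, phi0, phi1; field.
Qed.

Lemma blend_right eta : blend 1 eta = hermite (B 1) (T 1) eB eC eta.
Proof. unfold blend, hermite, vphi0, vphi1, psi0, psi1, phi0, phi1; field. Qed.

Lemma is_derive_blend_xi eta :
  is_derive B 1 dB -> is_derive T 1 dC -> is_derive (fun s => blend s eta) 1 (N eta).
Proof.
  intros HB HT.
  assert (EB : Derive B 1 = dB) by exact (is_derive_unique _ _ _ HB).
  assert (ET : Derive T 1 = dC) by exact (is_derive_unique _ _ _ HT).
  unfold blend, vphi0, vphi1, psi0, psi1, phi0, phi1.
  auto_derive.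
  - repeat split; [exists dB; exact HB | exists dC; exact HT].
  - change (Derive (fun x => B x) 1) with (Derive B 1).
    change (Derive (fun x => T x) 1) with (Derive T 1).
    rewrite EB, ET; field.
Qed.

End Blend.

Lemma norm_xeta_neq0 xx yy a b : detJ xx yy a b <> 0 -> norm_xeta xx yy a b <> 0.
Proof.
  unfold detJ, norm_xeta; intros Hdet Hn.
  apply sqrt_eq_0 in Hn; [| nra].
  apply Hdet.
  assert (Hx : deta xx a b = 0) by nra.
  assert (Hy : deta yy a b = 0) by nra.
  rewrite Hx, Hy; ring.
Qed.

Lemma SBC_eq0 xx yy e :
  detJ xx yy 1 e <> 0 -> (SBC xx yy e = 0 <-> dot_xxi_xeta xx yy 1 e = 0).
Proof.
  intros Hdet.
  pose proof (norm_xeta_neq0 _ _ _ _ Hdet) as Hn.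
  assert (ES : SBC xx yy e = - dot_xxi_xeta xx yy 1 e / norm_xeta xx yy 1 e ^ 2).
  { unfold SBC, KyBC, KxBC; field; auto. }
  rewrite ES; split; intros H.
  - apply Rmult_integral in H as [H | H]; [lra |].
    exfalso; revert H; apply Rinv_neq_0_compat, pow_nonzero, Hn.
  - rewrite H; field; auto.
Qed.

Lemma corner_flag_cases xx yy unBC e d :
  detJ xx yy 1 e <> 0 ->
  let lam := if Req_dec_T (dot_xxi_xeta xx yy 1 e) 0 then 0 else 1 in
  (lam = 0 -> d = TBC xx yy unBC e) ->
  (lam = 0 /\ SBC xx yy e = 0 /\ d = TBC xx yy unBC e) \/ (lam = 1 /\ SBC xx yy e <> 0).
Proof.
  intros Hdet lam Hcomp; unfold lam in *.
  destruct (Req_dec_T (dot_xxi_xeta xx yy 1 e) 0) as [E | E].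
  - left; repeat split; auto; apply SBC_eq0; auto.
  - right; split; auto; rewrite SBC_eq0; auto.
Qed.

Lemma corner_flux S Tn d gd lam :
  (lam = 0 /\ S = 0 /\ d = Tn) \/ (lam = 1 /\ S <> 0) ->
  Tn - S * (gd - lam * (gd - (Tn - d) / S)) = d.
Proof. intros [(-> & -> & ->) | (-> & HS)]; [ring | field; auto]. Qed.

Section Solution.

Variables (xx yy : R -> R -> R) (unBC : R * R -> R) (FL FB FT : R -> R).
Variables (g : R -> R -> R).

Lemma Pg_blend :
  Pg xx yy g = blend (g (-1)) (dxi g 1) (fun s => g s (-1)) (fun s => g s 1)
    (g (-1) (-1)) (g (-1) 1) (dxi g 1 (-1)) (dxi g 1 1)
    (lamB xx yy * deta g 1 (-1)) (lamC xx yy * deta g 1 1).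
Proof. reflexivity. Qed.

Lemma PFg_blend :
  PFg xx yy unBC FL FB FT g = blend FL (Fgxi xx yy unBC FB FT g) FB FT
    (FL (-1)) (FL 1) (Derive FB 1) (Derive FT 1)
    (lamB xx yy * FaB xx yy unBC FB) (lamC xx yy * FaC xx yy unBC FT).
Proof. reflexivity. Qed.

Let herm := hermite (g 1 (-1) - FB 1) (g 1 1 - FT 1)
  (lamB xx yy * (deta g 1 (-1) - FaB xx yy unBC FB))
  (lamC xx yy * (deta g 1 1 - FaC xx yy unBC FT)).

Let herm_d := hermite_d (g 1 (-1) - FB 1) (g 1 1 - FT 1)
  (lamB xx yy * (deta g 1 (-1) - FaB xx yy unBC FB))
  (lamC xx yy * (deta g 1 1 - FaC xx yy unBC FT)).

Lemma Fgxi_hermite eta :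
  Fgxi xx yy unBC FB FT g eta
  = TBC xx yy unBC eta - SBC xx yy eta * (deta g 1 eta - herm_d eta).
Proof. unfold Fgxi, herm_d, hermite_d; ring. Qed.

Lemma Vsol_right t : Vsol xx yy unBC FL FB FT g 1 t = g 1 t - herm t.
Proof.
  unfold Vsol; rewrite Pg_blend, PFg_blend, !blend_right.
  unfold herm, hermite; ring.
Qed.

Lemma Fgxi_m1 :
  detJ xx yy 1 (-1) <> 0 ->
  (lamB xx yy = 0 -> Derive FB 1 = TBC xx yy unBC (-1)) ->
  Fgxi xx yy unBC FB FT g (-1) = Derive FB 1.
Proof.
  intros Hdet Hcomp.
  rewrite Fgxi_hermite; unfold herm_d; rewrite hermite_d_m1.
  apply corner_flux, corner_flag_cases; assumption.
Qed.

Lemma Fgxi_1 :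
  detJ xx yy 1 1 <> 0 ->
  (lamC xx yy = 0 -> Derive FT 1 = TBC xx yy unBC 1) ->
  Fgxi xx yy unBC FB FT g 1 = Derive FT 1.
Proof.
  intros Hdet Hcomp.
  rewrite Fgxi_hermite; unfold herm_d; rewrite hermite_d_1.
  apply corner_flux, corner_flag_cases; assumption.
Qed.

Lemma is_derive_Vsol_xi eta :
  ex_derive (fun s => g s eta) 1 -> ex_derive (fun s => g s (-1)) 1 ->
  ex_derive (fun s => g s 1) 1 -> ex_derive FB 1 -> ex_derive FT 1 ->
  is_derive (fun s => Vsol xx yy unBC FL FB FT g s eta) 1
    (Fgxi xx yy unBC FB FT g eta).
Proof.
  intros Hg Hgm Hgp HFB HFT.
  replace (Fgxi xx yy unBC FB FT g eta)
    with (dxi g 1 eta - dxi g 1 eta + Fgxi xx yy unBC FB FT g eta) by ring.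
  unfold Vsol; rewrite Pg_blend, PFg_blend.
  refine (is_derive_plus _ _ _ _ _
    (is_derive_minus _ _ _ _ _ (Derive_correct _ _ Hg) _) _);
    apply is_derive_blend_xi; apply Derive_correct; assumption.
Qed.

Lemma is_derive_Vsol_eta eta :
  ex_derive (fun t => g 1 t) eta ->
  is_derive (fun t => Vsol xx yy unBC FL FB FT g 1 t) eta (deta g 1 eta - herm_d eta).
Proof.
  intros Hg.
  apply (is_derive_ext (fun t => g 1 t - herm t)); [intros t; symmetry; apply Vsol_right |].
  exact (is_derive_minus _ _ _ _ _ (Derive_correct _ _ Hg) (is_derive_hermite _ _ _ _ eta)).
Qed.

End Solution.

Theorem mainTheorem1
  (xx yy : R -> R -> R) (FL FB FT : R -> R) (unBC : R * R -> R)
  (Hx : C1_on_square xx) (Hy : C1_on_square yy)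
  (Hdet : forall eta, I11 eta -> detJ xx yy 1 eta <> 0)
  (HF : forall t, I11 t -> ex_derive FL t /\ ex_derive FB t /\ ex_derive FT t)
  (HcornA : FL (-1) = FB (-1)) (HcornD : FL 1 = FT (-1))
  (HcompB : lamB xx yy = 0 -> Derive FB 1 = TBC xx yy unBC (-1))
  (HcompC : lamC xx yy = 0 -> Derive FT 1 = TBC xx yy unBC 1)
  (g : R -> R -> R) (Hg : C1_on_square g) :
  forall xi eta, I11 xi -> I11 eta ->
    let V := Vsol xx yy unBC FL FB FT g in
    V (-1) eta = FL eta /\ V xi (-1) = FB xi /\ V xi 1 = FT xi /\
    ex_derive (fun s => V s eta) 1 /\ ex_derive (fun t => V 1 t) eta /\
    Derive (fun s => V s eta) 1 + SBC xx yy eta * Derive (fun t => V 1 t) eta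
      = TBC xx yy unBC eta.
Proof.
  intros xi eta Hxi Heta V.
  assert (I1 : I11 1) by (unfold I11; lra).
  assert (Im1 : I11 (-1)) by (unfold I11; lra).
  destruct (HF 1 I1) as (_ & HFB & HFT).
  destruct (Hg 1 eta I1 Heta) as (Hg_xi & Hg_eta & _).
  destruct (Hg 1 (-1) I1 Im1) as (Hg_xi_m1 & _).
  destruct (Hg 1 1 I1 I1) as (Hg_xi_1 & _).
  pose proof (is_derive_Vsol_xi xx yy unBC FL FB FT g eta
    Hg_xi Hg_xi_m1 Hg_xi_1 HFB HFT) as DV_xi.
  pose proof (is_derive_Vsol_eta xx yy unBC FL FB FT g eta Hg_eta) as DV_eta.
  repeat split.
  - unfold V, Vsol; rewrite Pg_blend, PFg_blend, !blend_left; auto; ring.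
  - unfold V, Vsol; rewrite Pg_blend, PFg_blend, !blend_bottom; auto using Fgxi_m1; ring.
  - unfold V, Vsol; rewrite Pg_blend, PFg_blend, !blend_top; auto using Fgxi_1; ring.
  - exact (ex_intro _ _ DV_xi).
  - exact (ex_intro _ _ DV_eta).
  - rewrite (is_derive_unique (fun s : R => V s eta) _ _ DV_xi),
      (is_derive_unique (fun t : R => V 1 t) _ _ DV_eta), Fgxi_hermite; ring.
Qed.
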